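(* Let $(P,\leq)$ be a partially ordered set. If $\tau$ is a compact topology on $P$ such that $\tau_i(P) \subseteq \tau$, then $\tau \subseteq \tau_o(P)$.
   Context: For $x\in P$ let $(x]=\{y\in P: y\leq x\}$ and $[x)=\{y\in P: y\geq x\}$. The interval topology $\tau_i(P)$ is the topology on $P$ generated by the subbase $\{P\setminus (x]: x\in P\}\cup\{P\setminus [x): x\in P\}$. A filter $\mathcal{F}$ on $P$ is a nonempty family of subsets of $P$ with $\emptyset\notin\mathcal{F}$, closed under finite intersections and supersets. For $A\subseteq P$ let $A^l=\{x\in P: x\leq a \text{ for all } a\in A\}$ and $A^u=\{x\in P: x\geq a\text{ for all } a\in A\}$; for a family $\mathcal{S}$ of subsets of $P$ let $\mathcal{S}^l=\bigcup\{S^l: S\in\mathcal{S}\}$ and $\mathcal{S}^u=\bigcup\{S^u:S\in\mathcal{S}\}$. $\bigwedge A$ denotes the greatest element of $A^l$ (if it exists) and $\bigvee A$ the least element of $A^u$ (if it exists). A filter $\mathcal{F}$ order-converges to $x\in P$ if $\bigwedge \mathcal{F}^u = x = \bigvee \mathcal{F}^l$ (both existing). The order convergence topology is $\tau_o(P)=\{U\subseteq P: \text{for every } x\in U \text{ and every filter } \mathcal{F} \text{ on } P \text{ order-converging to } x, \ U\in\mathcal{F}\}$. *)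

From HB Require Import structures.
From mathcomp Require Import all_boot all_order.
From Stdlib Require Import List.

Set Implicit Arguments.
Unset Strict Implicit.
Unset Printing Implicit Defensive.

Local Open Scope order_scope.

Section Defs.
Context {d : Order.disp_t} {P : porderType d}.

Definition pset := P -> Prop.

Definition is_topology (tau : pset -> Prop) : Prop :=
  tau (fun _ => False) /\ tau (fun _ => True) /\
  (forall C : pset -> Prop, (forall U, C U -> tau U) ->
     tau (fun x => exists U, C U /\ U x)) /\
  (forall U V, tau U -> tau V -> tau (fun x => U x /\ V x)).

Definition compact_top (tau : pset -> Prop) : Prop :=
  forall C : pset -> Prop, (forall U, C U -> tau U) ->
    (forall x, exists U, C U /\ U x) ->
    exists s : list pset, (forall U, In U s -> C U) /\
      (forall x, exists U, In U s /\ U x).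

Definition generated_top (S : pset -> Prop) (U : pset) : Prop :=
  forall tau, is_topology tau -> (forall A, S A -> tau A) -> tau U.

Definition down (x : P) : pset := fun y => y <= x.
Definition up (x : P) : pset := fun y => x <= y.

Definition interval_subbase (A : pset) : Prop :=
  exists x, A = (fun y => ~ down x y) \/ A = (fun y => ~ up x y).

Definition interval_top : pset -> Prop := generated_top interval_subbase.

Definition is_filter (F : pset -> Prop) : Prop :=
  (exists A, F A) /\ ~ F (fun _ => False) /\
  (forall A B, F A -> F B -> F (fun x => A x /\ B x)) /\
  (forall A B, F A -> (forall x, A x -> B x) -> F B).

Definition lowers (A : pset) : pset := fun x => forall a, A a -> x <= a.
Definition uppers (A : pset) : pset := fun x => forall a, A a -> a <= x.

Definition fam_lowers (F : pset -> Prop) : pset :=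
  fun x => exists S, F S /\ lowers S x.
Definition fam_uppers (F : pset -> Prop) : pset :=
  fun x => exists S, F S /\ uppers S x.

Definition is_inf (A : pset) (x : P) : Prop :=
  lowers A x /\ forall y, lowers A y -> y <= x.
Definition is_sup (A : pset) (x : P) : Prop :=
  uppers A x /\ forall y, uppers A y -> x <= y.

Definition order_converges (F : pset -> Prop) (x : P) : Prop :=
  is_inf (fam_uppers F) x /\ is_sup (fam_lowers F) x.

Definition order_top (U : pset) : Prop :=
  forall x, U x -> forall F, is_filter F -> order_converges F x -> F U.

End Defs.

(* Let a filter F order-converge to x in a tau-open set U.  The set U together
   with the complements of [b) for b in F^l and of (a] for a in F^u is a cover
   of P by tau-open sets: a point outside all of them lies between F^l and F^u,
   hence equals x.  Compactness yields a finite subcover, and each of its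
   members other than U misses some member of F.  The intersection of these
   finitely many members of F is then contained in U, so U is in F. *)
From mathcomp Require Import all_boot all_order.
From Stdlib Require Import List Classical.
Set Implicit Arguments.
Unset Strict Implicit.
Unset Printing Implicit Defensive.
Local Open Scope order_scope.

Section OrderConvergenceCover.
Context {d : Order.disp_t} {P : porderType d}.
Implicit Types (F : (P -> Prop) -> Prop) (U V : P -> Prop) (x : P).

Lemma interval_top_subbase (A : P -> Prop) : interval_subbase A -> interval_top A.
Proof. by move=> HA tau _ Hsub; apply: Hsub. Qed.

Lemma filter_setT F : is_filter F -> F (fun _ => True).
Proof. by move=> [[A FA] [_ [_ Fsup]]]; apply: (Fsup A). Qed.

Lemma order_converges_between F x (z : P) : order_converges F x ->
  uppers (fam_lowers F) z -> lowers (fam_uppers F) z -> z = x.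
Proof.
move=> [[_ Hinf] [_ Hsup]] zup zlow.
by apply/Order.POrderTheory.le_anti; rewrite Hinf // Hsup.
Qed.

Definition order_cover F U V : Prop :=
  V = U \/
  (exists b, fam_lowers F b /\ V = fun y => ~ up b y) \/
  (exists a, fam_uppers F a /\ V = fun y => ~ down a y).

Definition filter_trace_sub F U V : Prop :=
  exists T, F T /\ forall y, T y -> V y -> U y.

Lemma order_cover_open F U (tau : (P -> Prop) -> Prop) :
  (forall W, interval_top W -> tau W) -> tau U ->
  forall V, order_cover F U V -> tau V.
Proof.
move=> Hint HU V [->|[[b [_ ->]]|[a [_ ->]]]] //.
- by apply/Hint; apply: interval_top_subbase; exists b; right.
- by apply/Hint; apply: interval_top_subbase; exists a; left.
Qed.

Lemma order_cover_covers F U x : order_converges F x -> U x ->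
  forall z, exists V, order_cover F U V /\ V z.
Proof.
move=> Hconv Ux z; case: (classic (U z)) => Uz; first by exists U; split=> //; left.
case: (classic (exists b, fam_lowers F b /\ ~ up b z)) => [[b [Hb Nb]]|Nb].
  by exists (fun y => ~ up b y); split=> //; right; left; exists b.
case: (classic (exists a, fam_uppers F a /\ ~ down a z)) => [[a [Ha Na]]|Na].
  by exists (fun y => ~ down a y); split=> //; right; right; exists a.
exfalso; apply: Uz; rewrite (order_converges_between (z := z) Hconv) //.
- by move=> b Hb; apply: NNPP => Nbz; apply: Nb; exists b.
- by move=> a Ha; apply: NNPP => Naz; apply: Na; exists a.
Qed.

Lemma order_cover_trace F U V : is_filter F -> order_cover F U V ->
  filter_trace_sub F U V.
Proof.
move=> Hfil [->|[[b [[S [FS Sb]] ->]]|[a [[S [FS Sa]] ->]]]].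
- by exists (fun _ => True); split; [apply: filter_setT|].
- by exists S; split=> // y Sy; case; apply: Sb.
- by exists S; split=> // y Sy; case; apply: Sa.
Qed.

Lemma filter_trace_sub_list F U (s : list (P -> Prop)) : is_filter F ->
  (forall V, In V s -> filter_trace_sub F U V) ->
  filter_trace_sub F U (fun y => exists V, In V s /\ V y).
Proof.
move=> Hfil; elim: s => [|V s IH] Hs.
  by exists (fun _ => True); split=> [|y _ [V []]]; first exact: filter_setT.
have [T [FT HT]] := IH (fun W h => Hs W (or_intror h)).
have [T' [FT' HT']] := Hs V (or_introl erefl).
have [_ [_ [Fmeet _]]] := Hfil.
exists (fun y => T y /\ T' y); split; first exact: Fmeet.
move=> y [Ty T'y] [W [[<-|Ws] Wy]]; first exact: HT'.
by apply: HT => //; exists W.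
Qed.

End OrderConvergenceCover.

Theorem theorem2p1 (d : Order.disp_t) (P : porderType d) (tau : (P -> Prop) -> Prop) :
  is_topology tau -> compact_top tau ->
  (forall U : P -> Prop, interval_top U -> tau U) ->
  forall U : P -> Prop, tau U -> order_top U.
Proof.
move=> _ Hcomp Hint U HU x Ux F Hfil Hconv.
have [s [sC scov]] := Hcomp _ (order_cover_open Hint HU) (order_cover_covers Hconv Ux).
have [T [FT HT]] :=
  filter_trace_sub_list Hfil (fun V HV => order_cover_trace Hfil (sC V HV)).
have [_ [_ [_ Fsup]]] := Hfil.
by apply: (Fsup T) => // y Ty; apply: HT.
Qed.
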